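(* Let $(A,\cdot)$ be a nearly associative algebra over a field $\mathbb{K}$ of characteristic $0$, let $V$ be a linear space and let $l,r:A\to\mathrm{End}(V)$ be linear maps such that $(l,r,V)$ is a bimodule of $(A,\cdot)$. Then the bracket on $A\oplus V$ given by $[x+u,y+v]=(x\cdot y-y\cdot x)+(l(x)-r(x))v-(l(y)-r(y))u$ for $x,y\in A$, $u,v\in V$, is a Lie algebra product on $A\oplus V$.
   Context: An algebra $(A,\cdot)$ is nearly associative if $x\cdot(y\cdot z)=(z\cdot x)\cdot y$ for all $x,y,z\in A$. A triple $(l,r,V)$, with $V$ a linear space and $l,r:A\to\mathrm{End}(V)$ linear, is a bimodule of $(A,\cdot)$ if for all $x,y\in A$: $l(x)l(y)=r(y)r(x)$, $l(x)r(y)=l(y\cdot x)$, and $r(x)l(y)=r(x\cdot y)$. *)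

From mathcomp Require Import all_boot all_order all_algebra.
Set Implicit Arguments. Unset Strict Implicit. Unset Printing Implicit Defensive.
Import GRing.Theory.
Local Open Scope ring_scope.

Definition bilinear_op (K : fieldType) (W : lmodType K) (op : W -> W -> W) :=
  (forall (a : K) x y z, op (a *: x + y) z = a *: op x z + op y z) /\
  (forall (a : K) x y z, op x (a *: y + z) = a *: op x y + op x z).

Definition nearly_associative (A : Type) (mul : A -> A -> A) :=
  forall x y z, mul x (mul y z) = mul (mul z x) y.

Definition linear_to_End (K : fieldType) (A V : lmodType K) (l : A -> V -> V) :=
  (forall x (a : K) u v, l x (a *: u + v) = a *: l x u + l x v) /\
  (forall (a : K) x y v, l (a *: x + y) v = a *: l x v + l y v).

Definition bimodule (K : fieldType) (A V : lmodType K) (mul : A -> A -> A)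
  (l r : A -> V -> V) :=
  [/\ linear_to_End l, linear_to_End r,
      (forall x y v, l x (l y v) = r y (r x v)),
      (forall x y v, l x (r y v) = l (mul y x) v) &
      (forall x y v, r x (l y v) = r (mul x y) v)].

Definition lie_bracket (K : fieldType) (W : lmodType K) (br : W -> W -> W) :=
  [/\ bilinear_op br,
      (forall x, br x x = 0) &
      (forall x y z, br x (br y z) + br y (br z x) + br z (br x y) = 0)].

Definition sd_bracket (K : fieldType) (A V : lmodType K) (mul : A -> A -> A)
  (l r : A -> V -> V) (p q : A * V) : A * V :=
  (mul p.1 q.1 - mul q.1 p.1,
   (l p.1 q.2 - r p.1 q.2) - (l q.1 p.2 - r q.1 p.2)).

From mathcomp Require Import all_boot all_order all_algebra.

Set Implicit Arguments.
Unset Strict Implicit.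
Unset Printing Implicit Defensive.
Import GRing.Theory.
Local Open Scope ring_scope.

(* Put rho = l - r.  Near associativity rewrites every x(yz) as (zx)y, after
   which the twelve terms of the Jacobiator of the commutator [x,y] = xy - yx
   cancel in pairs, so (A, [,]) is a Lie algebra.  The bimodule axioms give
   rho(xy - yx) = [rho x, rho y], so rho is a representation of this Lie
   algebra on V, and the bracket on A (+) V is the semidirect product of
   (A, [,]) with this representation, which is a Lie algebra for every
   representation.  Characteristic 0 plays no role. *)

Lemma bilinear_opP (K : fieldType) (W : lmodType K) (op : W -> W -> W) :
  bilinear_op op <-> (forall z, linear (op^~ z)) /\ (forall z, linear (op z)).
Proof.
split=> [[opL opR] | [opL opR]].
  by split=> z a x y; [exact: opL | exact: opR].
by split=> a x y z; [exact: opL | exact: opR].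
Qed.

Lemma linear_to_EndP (K : fieldType) (A V : lmodType K) (l : A -> V -> V) :
  linear_to_End l <-> (forall x, linear (l x)) /\ (forall v, linear (l^~ v)).
Proof.
split=> [[lR lL] | [lR lL]].
  by split=> [x a u v | v a x y]; [exact: lR | exact: lL].
by split=> [x a u v | a x y v]; [exact: lR | exact: lL].
Qed.

Lemma subr_linear_comb (K : fieldType) (W : lmodType K) (a : K) (p q r s : W) :
  (a *: p + q) - (a *: r + s) = a *: (p - r) + (q - s).
Proof. by rewrite scalerBr opprD addrACA. Qed.

Lemma linear_subf (K : fieldType) (U W : lmodType K) (f g : U -> W) :
  linear f -> linear g -> linear (fun u => f u - g u).
Proof. by move=> fL gL a u v; rewrite fL gL subr_linear_comb. Qed.

Lemma jacobi_cancel (V : zmodType) (a b c d e f : V) :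
  (a - b) - (c - d) + ((e - d) - (a - f)) + ((c - f) - (e - b)) = 0.
Proof.
rewrite !opprB !addrA (ACl ((1*8)*(2*11)*(3*6)*(4*9)*(5*12)*(7*10))%AC) /=.
by rewrite !subrr !addNr !addr0.
Qed.

Lemma commutator_action_cancel (V : zmodType) (a b c d p q : V) :
  (q - b - (c - p)) - (p - a - (d - q)) = a - b - (c - d).
Proof.
by rewrite !opprB !addrA (ACl ((1*6)*(3*8)*7*2*5*4)%AC) /= !subrr !add0r.
Qed.

Definition commutator (A : zmodType) (mul : A -> A -> A) x y :=
  mul x y - mul y x.

Section NearlyAssociativeCommutator.
Variables (K : fieldType) (A : lmodType K) (mul : A -> A -> A).
Hypothesis mul_bilinear : bilinear_op mul.

Lemma commutator_bilinear : bilinear_op (commutator mul).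
Proof.
have /bilinear_opP[mulL mulR] := mul_bilinear.
by apply/bilinear_opP; split=> z; apply: linear_subf.
Qed.

Lemma commutator_jacobi : nearly_associative mul ->
  forall x y z, commutator mul x (commutator mul y z)
    + commutator mul y (commutator mul z x)
    + commutator mul z (commutator mul x y) = 0.
Proof.
move=> mul_nearly_assoc x y z; have /bilinear_opP[mulL mulR] := mul_bilinear.
rewrite /commutator !(zmod_morphism_linear (mulL _)).
rewrite !(zmod_morphism_linear (mulR _)).
by rewrite !mul_nearly_assoc jacobi_cancel.
Qed.

Lemma nearly_associative_commutator_lie :
  nearly_associative mul -> lie_bracket (commutator mul).
Proof.
move=> mul_nearly_assoc; split; first exact: commutator_bilinear.
  by move=> x; rewrite /commutator subrr.
exact: commutator_jacobi.
Qed.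

End NearlyAssociativeCommutator.

Definition lie_representation (K : fieldType) (A V : lmodType K)
    (br : A -> A -> A) (rho : A -> V -> V) :=
  linear_to_End rho /\
  forall x y v, rho (br x y) v = rho x (rho y v) - rho y (rho x v).

Definition diff_action (A : Type) (V : zmodType) (l r : A -> V -> V) x v :=
  l x v - r x v.

Lemma bimodule_diff_action_representation (K : fieldType) (A V : lmodType K)
    (mul : A -> A -> A) (l r : A -> V -> V) :
  bimodule mul l r -> lie_representation (commutator mul) (diff_action l r).
Proof.
case=> /linear_to_EndP[lR lL] /linear_to_EndP[rR rL] llE lrE rlE; split.
  by apply/linear_to_EndP; split=> *; apply: linear_subf.
move=> x y v; rewrite /diff_action /commutator.
rewrite !(zmod_morphism_linear (lL _)) !(zmod_morphism_linear (rL _)).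
rewrite !(zmod_morphism_linear (lR _)) !(zmod_morphism_linear (rR _)).
by rewrite !lrE !rlE llE [l y (l x v)]llE commutator_action_cancel.
Qed.

Definition semidirect_bracket (A V : zmodType) (br : A -> A -> A)
    (rho : A -> V -> V) (p q : A * V) : A * V :=
  (br p.1 q.1, rho p.1 q.2 - rho q.1 p.2).

Section SemidirectProduct.
Variables (K : fieldType) (A V : lmodType K).
Variables (br : A -> A -> A) (rho : A -> V -> V).
Hypotheses (br_lie : lie_bracket br) (rho_rep : lie_representation br rho).

Lemma semidirect_bracket_bilinear : bilinear_op (semidirect_bracket br rho).
Proof.
have [/bilinear_opP[brL brR] _ _] := br_lie.
have [/linear_to_EndP[rhoR rhoL] _] := rho_rep.
split=> a [x u] [y v] [z w]; rewrite /semidirect_bracket /=.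
  by rewrite brL rhoL rhoR subr_linear_comb.
by rewrite brR rhoL rhoR subr_linear_comb.
Qed.

Lemma semidirect_bracket_alternating p : semidirect_bracket br rho p p = 0.
Proof.
by have [_ brxx _] := br_lie; rewrite /semidirect_bracket brxx subrr.
Qed.

Lemma semidirect_bracket_jacobi p q s :
  let sd := semidirect_bracket br rho in
  sd p (sd q s) + sd q (sd s p) + sd s (sd p q) = 0.
Proof.
have [_ _ br_jacobi] := br_lie.
have [/linear_to_EndP[rhoR _] rho_br] := rho_rep.
case: p q s => [x u] [y v] [z w]; rewrite /semidirect_bracket /=.
congr pair; first exact: br_jacobi.
by rewrite !(zmod_morphism_linear (rhoR _)) !rho_br addrAC jacobi_cancel.
Qed.

Lemma semidirect_bracket_lie : lie_bracket (semidirect_bracket br rho).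
Proof.
split; [exact: semidirect_bracket_bilinear
       | exact: semidirect_bracket_alternating
       | exact: semidirect_bracket_jacobi].
Qed.

End SemidirectProduct.

Lemma sd_bracketE (K : fieldType) (A V : lmodType K) (mul : A -> A -> A)
    (l r : A -> V -> V) :
  sd_bracket mul l r = semidirect_bracket (commutator mul) (diff_action l r).
Proof. by []. Qed.

Theorem mainTheorem4 (K : fieldType) (A V : lmodType K)
  (mul : A -> A -> A) (l r : A -> V -> V) :
  [pchar K] =i pred0 ->
  bilinear_op mul ->
  nearly_associative mul ->
  bimodule mul l r ->
  lie_bracket (sd_bracket mul l r : (A * V)%type -> _ -> _).
Proof.
move=> _ mul_bilinear mul_nearly_assoc lr_bimodule; rewrite sd_bracketE.
apply: semidirect_bracket_lie.
  exact: nearly_associative_commutator_lie.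
exact: bimodule_diff_action_representation.
Qed.
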